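(* Let $(X,\mathcal F,\mu)$ be a probability space and let $H$ be a Banach space of real-valued functions on $X$ with $H\subset L^1(X,\mu)$. Let $\mathcal A,\mathcal B$ be bounded linear operators on $H$ which are non-negative (they map non-negative functions in $H$ to non-negative functions). Assume: (1) $\mathcal L=\mathcal A+\mathcal B$ is Markov, i.e. $\int_X \mathcal L u\,d\mu=\int_X u\,d\mu$ for all $u\in H$ with $u\ge 0$; (2) $J=(1-\mathcal B)^{-1}=\sum_{m=0}^\infty \mathcal B^m$ is a bounded operator on $H$. Then $\widehat{\mathcal L}=\mathcal A J=\sum_{m=0}^\infty \mathcal A\mathcal B^m$ is Markov, i.e. $\int_X\widehat{\mathcal L}v\,d\mu=\int_X v\,d\mu$ for all $v\in H$, $v\ge0$. Moreover, if $\hat h\in H$, $\hat h\ge 0$, satisfies $\widehat{\mathcal L}\hat h=\hat h$, then $h=J\hat h$ is non-negative and satisfies $\mathcal L h=h$. *)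

From HB Require Import structures.
From mathcomp Require Import all_boot all_order all_algebra.
From mathcomp Require Import all_classical all_reals all_analysis.
Set Implicit Arguments. Unset Strict Implicit. Unset Printing Implicit Defensive.
Import Order.TTheory GRing.Theory Num.Theory.
Import numFieldNormedType.Exports.
Local Open Scope classical_set_scope.
Local Open Scope ring_scope.

(* An element u of the Banach space H, viewed through the realisation map
   iota : H -> (X -> R), is non-negative when the function iota u is
   non-negative mu-almost everywhere (functions in L^1 are compared a.e.). *)
Definition fnonneg (d : measure_display) (X : measurableType d) (R : realType)
  (mu : {measure set X -> \bar R}) (H : Type) (iota : H -> X -> R) (u : H) : Prop :=
  {ae mu, forall x, 0 <= iota u x}.

Definition hint (d : measure_display) (X : measurableType d) (R : realType)
  (mu : {measure set X -> \bar R}) (H : Type) (iota : H -> X -> R) (u : H) : \bar R :=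
  (\int[mu]_x (iota u x)%:E)%E.

Definition is_markov (d : measure_display) (X : measurableType d) (R : realType)
  (mu : {measure set X -> \bar R}) (H : Type) (iota : H -> X -> R) (T : H -> H) : Prop :=
  forall u, fnonneg mu iota u -> hint mu iota (T u) = hint mu iota u.

Definition pos_op (d : measure_display) (X : measurableType d) (R : realType)
  (mu : {measure set X -> \bar R}) (H : Type) (iota : H -> X -> R) (T : H -> H) : Prop :=
  forall u, fnonneg mu iota u -> fnonneg mu iota (T u).

Definition neumann_partial (H : zmodType) (B : H -> H) (n : nat) (u : H) : H :=
  \sum_(m < n) iter m B u.

From HB Require Import structures.
From mathcomp Require Import all_boot all_order all_algebra.
From mathcomp Require Import all_classical all_reals all_analysis.
From mathcomp Require Import measurable_realfun lra.
Import Order.TTheory GRing.Theory Num.Theory.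
Import numFieldNormedType.Exports.
Local Open Scope classical_set_scope.
Local Open Scope ring_scope.

(* Let S_n = \sum_(m < n) B^m, so that S_n u --> J u in H.  The Markov property
   of L = A + B applied to the non-negative vectors B^m v telescopes to
   int A (S_n v) = int v - int B^n v.  Integration is a bounded functional on H
   and B^n v = S_(n+1) v - S_n v --> 0, so letting n --> oo gives
   int A (J v) = int v.  The S_n h are non-negative and the non-negative cone is
   closed in H, hence J h >= 0; finally J = 1 + B J turns A (J h) = h into
   L (J h) = J h. *)

Lemma normr_sub_le_dist_ge0 (R : realDomainType) (f w : R) :
  0 <= w -> `|f| - f <= 2 * `|f - w|.
Proof.
move=> w0; have [f0|f0] := lerP 0 f; first by rewrite ger0_norm // subrr mulr_ge0.
by rewrite ltr0_norm // ltr0_norm ?subr_lt0 ?(lt_le_trans f0 w0) //; lra.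
Qed.

Lemma scaled_dist_cvg0 {R : realType} {V : normedModType R} (k : R) {u_ : nat -> V}
  {u : V} : u_ n @[n --> \oo] --> u -> k * `|u - u_ n| @[n --> \oo] --> 0.
Proof.
move=> u_u; have : `|u - u_ n| @[n --> \oo] --> `|u - u|.
  by apply: cvg_norm; apply: cvgB => //; exact: cvg_cst.
by rewrite subrr normr0 => /(cvgMr (a := k)); rewrite mulr0.
Qed.

Section Neumann_series.
Context {R : realType} {H : normedModType R} {B : {linear H -> H}} {J : H -> H}.
Hypothesis J_neumann : forall e : R, 0 < e ->
  \forall n \near \oo, forall u : H, `|J u - neumann_partial B n u| <= e * `|u|.

Lemma neumann_partial0 u : neumann_partial B 0 u = 0.
Proof. by rewrite /neumann_partial big_ord0. Qed.

Lemma neumann_partialS n u :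
  neumann_partial B n.+1 u = neumann_partial B n u + iter n B u.
Proof. by rewrite /neumann_partial big_ord_recr. Qed.

Lemma neumann_partialSl n u :
  neumann_partial B n.+1 u = u + B (neumann_partial B n u).
Proof. by rewrite /neumann_partial big_ord_recl linear_sum. Qed.

Lemma neumann_partial_cvg u : neumann_partial B n u @[n --> \oo] --> J u.
Proof.
apply/cvgrPdist_le => e e0.
have u1 : 0 < `|u| + 1 by rewrite ltr_wpDl.
move: (J_neumann _ (divr_gt0 e0 u1)); apply: filterS => n /(_ u) /le_trans; apply.
by rewrite mulrAC ler_pdivrMr // ler_wpM2l ?ltW // ltrDl.
Qed.

Lemma neumann_partialS_cvg u : neumann_partial B n.+1 u @[n --> \oo] --> J u.
Proof.
by rewrite (cvg_shiftS (fun n => neumann_partial B n u)); exact: neumann_partial_cvg.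
Qed.

Lemma iter_neumann_cvg0 u : iter n B u @[n --> \oo] --> 0.
Proof.
have -> : (fun n => iter n B u) =
    (fun n => neumann_partial B n.+1 u - neumann_partial B n u).
  by apply/funext => n; rewrite neumann_partialS addrC addKr.
rewrite -(subrr (J u)); apply: cvgB; last exact: neumann_partial_cvg.
exact: neumann_partialS_cvg.
Qed.

Lemma neumann_fixpoint u : continuous B -> J u = u + B (J u).
Proof.
move=> B_cont; apply: cvg_unique (neumann_partialS_cvg u) _; first exact: norm_hausdorff.
have -> : (fun n => neumann_partial B n.+1 u) =
    (fun n => u + B (neumann_partial B n u)).
  by apply/funext => n; exact: neumann_partialSl.
by apply: cvgD; [exact: cvg_cst | exact: cvg_comp (neumann_partial_cvg u) (B_cont _)].
Qed.

End Neumann_series.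

Section L1_realisation.
Context {d : measure_display} {X : measurableType d} {R : realType}
  {mu : {measure set X -> \bar R}} {H : normedModType R} {iota : H -> X -> R}.
Hypothesis iota_lin : forall (a : R) (u v : H) (x : X),
  iota (a *: u + v) x = a * iota u x + iota v x.
Hypothesis iota_int : forall u : H, mu.-integrable setT (fun x => (iota u x)%:E).
Context {C : R}.
Hypothesis iota_L1 : forall u : H,
  (\int[mu]_x (`|iota u x|)%:E <= (C * `|u|)%:E)%E.

Lemma iotaD u v x : iota (u + v) x = iota u x + iota v x.
Proof. by have := iota_lin 1 u v x; rewrite scale1r mul1r. Qed.

Lemma iota0 x : iota 0 x = 0.
Proof. by apply/(addrI (iota 0 x)); rewrite -iotaD !addr0. Qed.

Lemma iotaZ a u x : iota (a *: u) x = a * iota u x.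
Proof. by rewrite -[a *: u]addr0 iota_lin iota0 addr0. Qed.

Lemma iotaB u v x : iota (u - v) x = iota u x - iota v x.
Proof. by rewrite -scaleN1r addrC iota_lin mulN1r addrC. Qed.

Lemma iota_measurable u : measurable_fun setT (iota u).
Proof. exact/measurable_EFinP/(measurable_int _ (iota_int u)). Qed.

Lemma measurable_normr_iota u : measurable_fun setT (fun x => `|iota u x|).
Proof. exact: measurableT_comp (@normr_measurable R setT) (iota_measurable u). Qed.

Definition hintr (u : H) : R := fine (hint mu iota u).

Lemma hintE u : hint mu iota u = (hintr u)%:E.
Proof. by rewrite /hintr fineK // (integrable_fin_num _ (iota_int u)). Qed.

Lemma hintrD u v : hintr (u + v) = hintr u + hintr v.
Proof.
apply: EFin_inj; rewrite EFinD -!hintE /hint.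
by under eq_integral do rewrite iotaD EFinD; rewrite integralD.
Qed.

Lemma hintrZ a u : hintr (a *: u) = a * hintr u.
Proof.
apply: EFin_inj; rewrite EFinM -!hintE /hint.
by under eq_integral do rewrite iotaZ EFinM; rewrite integralZl.
Qed.

Lemma hintr0 : hintr 0 = 0.
Proof. by rewrite -(scale0r 0) hintrZ mul0r. Qed.

Lemma hintrB u v : hintr (u - v) = hintr u - hintr v.
Proof. by rewrite -scaleN1r hintrD hintrZ mulN1r. Qed.

Lemma hintr_le u : `|hintr u| <= C * `|u|.
Proof.
rewrite -lee_fin; apply: le_trans (iota_L1 u).
rewrite (_ : (`|hintr u|)%:E = `|(hintr u)%:E|%E) // -hintE.
exact/le_abse_integral/measurable_int/(iota_int u).
Qed.

Lemma hintr_cvg {u_ : nat -> H} {u : H} :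
  u_ n @[n --> \oo] --> u -> hintr (u_ n) @[n --> \oo] --> hintr u.
Proof.
move=> /(scaled_dist_cvg0 C) /cvgr0Pnorm_le Cu; apply/cvgrPdist_le => e /Cu.
apply: filterS => n; apply: le_trans.
by rewrite -hintrB (le_trans (hintr_le _)) // ler_norm.
Qed.

Lemma fnonneg0 : fnonneg mu iota 0.
Proof. by apply: aeW => x; rewrite iota0. Qed.

Lemma fnonnegD u v :
  fnonneg mu iota u -> fnonneg mu iota v -> fnonneg mu iota (u + v).
Proof. by move=> u0 v0; apply: filterS2 u0 v0 => x ux vx; rewrite iotaD addr_ge0. Qed.

Lemma integral_normr_subr_le u w : fnonneg mu iota w ->
  (\int[mu]_x (`|iota u x| - iota u x)%:E <= (2 * C * `|u - w|)%:E)%E.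
Proof.
move=> w0; apply: (@le_trans _ _ (\int[mu]_x (2 * `|iota (u - w) x|)%:E)%E).
  apply: ae_ge0_le_integral => //.
  - by move=> x _; rewrite lee_fin subr_ge0 ler_norm.
  - by apply/measurable_EFinP/measurable_funB;
      [exact: measurable_normr_iota | exact: iota_measurable].
  - by apply/measurable_EFinP/measurable_funM => //; exact: measurable_normr_iota.
  - by apply: filterS w0 => x wx _; rewrite lee_fin iotaB normr_sub_le_dist_ge0.
under eq_integral do rewrite EFinM.
rewrite ge0_integralZl_EFin //; last exact/measurable_EFinP/measurable_normr_iota.
by rewrite -mulrA EFinM lee_wpmul2l.
Qed.

(* The realisation is L^1-bounded, so the a.e. non-negative cone is closed in H. *)
Lemma fnonneg_cvg (u_ : nat -> H) u : u_ n @[n --> \oo] --> u ->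
  (forall n, fnonneg mu iota (u_ n)) -> fnonneg mu iota u.
Proof.
move=> u_u u_0; pose g x := `|iota u x| - iota u x.
have g0 x : 0 <= g x by rewrite subr_ge0 ler_norm.
have g_le n := integral_normr_subr_le u _ (u_0 n).
have g_fin : (\int[mu]_x (g x)%:E)%E \is a fin_num.
  rewrite ge0_fin_numE; last by apply: integral_ge0 => x _; rewrite lee_fin.
  exact: le_lt_trans (g_le 0%N) (ltry _).
have g_int0 : (\int[mu]_x (g x)%:E)%E = 0%E.
  apply/eqP; rewrite eq_le integral_ge0 ?andbT; last by move=> x _; rewrite lee_fin.
  rewrite -(fineK g_fin) lee_fin.
  apply: cvgr_to_ge (scaled_dist_cvg0 (2 * C) u_u) _.
  by apply: nearW => n; rewrite -lee_fin fineK.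
have : ae_eq mu setT (fun x => (g x)%:E) (cst 0%E).
  apply/ae_eq_integral_abs => //.
    by apply/measurable_EFinP/measurable_funB;
      [exact: measurable_normr_iota | exact: iota_measurable].
  by rewrite -[RHS]g_int0; apply: eq_integral => x _; rewrite gee0_abs ?lee_fin.
apply: filterS => x /(_ I) [] /eqP; rewrite subr_eq0 => /eqP <-.
exact: normr_ge0.
Qed.

Section Markov_operators.
Context {A B : {linear H -> H}} {J : H -> H}.
Hypothesis B_pos : pos_op mu iota B.
Hypothesis L_markov : is_markov mu iota (fun u => A u + B u).
Hypothesis J_neumann : forall e : R, 0 < e ->
  \forall n \near \oo, forall u : H, `|J u - neumann_partial B n u| <= e * `|u|.

Lemma fnonneg_iter n u : fnonneg mu iota u -> fnonneg mu iota (iter n B u).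
Proof. by move=> u0; elim: n => //= n; exact: B_pos. Qed.

Lemma fnonneg_neumann_partial n u :
  fnonneg mu iota u -> fnonneg mu iota (neumann_partial B n u).
Proof.
move=> u0; elim: n => [|n IH]; first by rewrite neumann_partial0; exact: fnonneg0.
by rewrite neumann_partialS; apply: fnonnegD => //; exact: fnonneg_iter.
Qed.

Lemma fnonneg_J u : fnonneg mu iota u -> fnonneg mu iota (J u).
Proof.
move=> u0; apply: fnonneg_cvg (neumann_partial_cvg J_neumann u) _ => n.
exact: fnonneg_neumann_partial.
Qed.

Lemma hintr_markov u : fnonneg mu iota u -> hintr (A u) + hintr (B u) = hintr u.
Proof. by move=> /L_markov; rewrite /= !hintE hintrD => -[]. Qed.

Lemma hintr_A_neumann_partial n u : fnonneg mu iota u ->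
  hintr (A (neumann_partial B n u)) = hintr u - hintr (iter n B u).
Proof.
move=> u0; elim: n => [|n IH]; first by rewrite neumann_partial0 linear0 hintr0 subrr.
rewrite neumann_partialS linearD hintrD IH /=.
by rewrite -(hintr_markov _ (fnonneg_iter n _ u0)) opprD addrA addrAC subrK.
Qed.

Lemma is_markov_AJ : continuous A -> is_markov mu iota (fun v => A (J v)).
Proof.
move=> A_cont v v0; rewrite /= !hintE; congr EFin.
have AJ_cvg : hintr (A (neumann_partial B n v)) @[n --> \oo] --> hintr (A (J v)).
  exact/hintr_cvg/(cvg_comp _ _ (neumann_partial_cvg J_neumann v) (A_cont _)).
have AS_eq : (fun n => hintr (A (neumann_partial B n v))) =
    (fun n => hintr v - hintr (iter n B v)).
  by apply/funext => n; exact: hintr_A_neumann_partial.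
have id_cvg : hintr v - hintr (iter n B v) @[n --> \oo] --> hintr v - hintr 0.
  exact: cvgB (cvg_cst _) (hintr_cvg (iter_neumann_cvg0 J_neumann v)).
rewrite hintr0 subr0 -AS_eq in id_cvg.
exact: cvg_unique AJ_cvg id_cvg.
Qed.

End Markov_operators.

End L1_realisation.

Theorem mainTheorem3 (d : measure_display) (X : measurableType d) (R : realType)
  (mu : probability X R) (H : completeNormedModType R)
  (iota : H -> X -> R)
  (iota_lin : forall (a : R) (u v : H) (x : X), iota (a *: u + v) x = a * iota u x + iota v x)
  (iota_inj : injective iota)
  (iota_int : forall u : H, mu.-integrable setT (fun x => (iota u x)%:E))
  (iota_cont : exists C : R, forall u : H,
      (\int[mu]_x (`|iota u x|)%:E <= (C * `|u|)%:E)%E)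
  (A B : {linear H -> H})
  (A_cont : continuous A) (B_cont : continuous B)
  (A_pos : pos_op mu iota A) (B_pos : pos_op mu iota B)
  (L_markov : is_markov mu iota (fun u => A u + B u))
  (J : H -> H) (J_cont : continuous J)
  (J_neumann : forall e : R, 0 < e ->
      \forall n \near \oo, forall u : H, `|J u - neumann_partial B n u| <= e * `|u|) :
  is_markov mu iota (fun v => A (J v)) /\
  (forall hh : H, fnonneg mu iota hh -> A (J hh) = hh ->
     fnonneg mu iota (J hh) /\ A (J hh) + B (J hh) = J hh).
Proof.
have [C iota_L1] := iota_cont.
split; first exact: (is_markov_AJ iota_lin iota_int iota_L1 B_pos L_markov J_neumann A_cont).
move=> h h0 AJh; split.
  exact: (fnonneg_J iota_lin iota_int iota_L1 B_pos J_neumann h h0).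
by rewrite AJh -(neumann_fixpoint J_neumann h B_cont).
Qed.
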